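(* For every ProbNetKAT program $p$, every $n\in\mathbb{N}$ and all $a,b,b'\subseteq\mathsf{Pk}$, \[ \sum_{a'\subseteq\mathsf{Pk}} [b'=a'\cup b]\cdot \mathcal{B}[\![p^{(n)}]\!]_{a,a'} = \sum_{a'\subseteq\mathsf{Pk}} \big(\mathcal{S}[\![p]\!]^{n+1}\big)_{(a,b),(a',b')}. \]
   Context: $\mathsf{Pk}$ is a finite set of packets (records of finitely many fields with finitely many values); $[\varphi]$ is the Iverson bracket. ProbNetKAT programs are built from predicates $\mathsf{false},\mathsf{true}, f=n$, their negations/disjunctions/conjunctions, assignments $f\leftarrow n$, union $p\,\&\,q$, sequencing $p;q$, probabilistic choice $p\oplus_r q$ and iteration $p^*$. $p^{(0)}=\mathsf{true}$, $p^{(n+1)}=\mathsf{true}\,\&\,(p;p^{(n)})$. The matrix semantics $\mathcal{B}[\![p]\!]\in[0,1]^{2^{\mathsf{Pk}}\times 2^{\mathsf{Pk}}}$: $\mathcal{B}[\![\mathsf{false}]\!]_{ab}=[b=\emptyset]$; $\mathcal{B}[\![\mathsf{true}]\!]_{ab}=[a=b]$; $\mathcal{B}[\![f=n]\!]_{ab}=[b=\{\pi\in a:\pi.f=n\}]$; $\mathcal{B}[\![\neg t]\!]_{ab}=[b\subseteq a]\mathcal{B}[\![t]\!]_{a,a-b}$; $\mathcal{B}[\![f\leftarrow n]\!]_{ab}=[b=\{\pi[f:=n]:\pi\in a\}]$; $\mathcal{B}[\![p\,\&\,q]\!]_{ab}=\sum_{c,d}[c\cup d=b]\mathcal{B}[\![p]\!]_{ac}\mathcal{B}[\![q]\!]_{ad}$;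 $\mathcal{B}[\![p;q]\!]=\mathcal{B}[\![p]\!]\mathcal{B}[\![q]\!]$; $\mathcal{B}[\![p\oplus_r q]\!]=r\mathcal{B}[\![p]\!]+(1-r)\mathcal{B}[\![q]\!]$; $\mathcal{B}[\![p^*]\!]_{ab}=\lim_n\mathcal{B}[\![p^{(n)}]\!]_{ab}$. The small-step matrix is $\mathcal{S}[\![p]\!]_{(a,b),(a',b')}=[b'=b\cup a]\,\mathcal{B}[\![p]\!]_{a,a'}$. *)

From HB Require Import structures.
From mathcomp Require Import all_boot all_order all_algebra.
From mathcomp Require Import all_classical all_reals all_analysis.
Set Implicit Arguments. Unset Strict Implicit. Unset Printing Implicit Defensive.
Import Order.TTheory GRing.Theory Num.Theory.
Import numFieldNormedType.Exports.
Local Open Scope ring_scope.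

Section ProbNetKAT.
Variables (F V : finType) (R : realType).

Definition packet := {ffun F -> V}.

Definition upd (pi : packet) (f : F) (n : V) : packet :=
  [ffun g => if g == f then n else pi g].

Inductive test :=
| PFalse | PTrue | PTest of F & V
| PNeg of test | POr of test & test | PAnd of test & test.

Inductive prog :=
| Pred of test
| Assign of F & V
| Union of prog & prog
| Seq of prog & prog
| Choice of prog & R & prog
| Star of prog.

Fixpoint wf (p : prog) : Prop :=
  match p with
  | Pred _ | Assign _ _ => True
  | Union p q | Seq p q => wf p /\ wf q
  | Choice p r q => 0 <= r <= 1 /\ wf p /\ wf q
  | Star p => wf p
  end.

Fixpoint ppow (p : prog) (n : nat) : prog :=
  match n with
  | 0 => Pred PTrue
  | n'.+1 => Union (Pred PTrue) (Seq p (ppow p n'))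
  end.

Definition mat (T : finType) := T -> T -> R.

Definition mmul (T : finType) (M N : mat T) : mat T :=
  fun a b => \sum_(c : T) M a c * N c b.

Definition mid (T : finType) : mat T := fun a b => (a == b)%:R.

Fixpoint mpow (T : finType) (M : mat T) (n : nat) : mat T :=
  match n with
  | 0 => @mid T
  | n'.+1 => mmul M (mpow M n')
  end.

Notation St := {set packet}.

Definition Bfalse : mat St := fun a b => (b == finset.set0)%:R.
Definition Btrue : mat St := @mid St.
Definition Btest (f : F) (n : V) : mat St :=
  fun a b => (b == [set pi in a | pi f == n])%:R.
Definition Bneg (M : mat St) : mat St :=
  fun a b => (b \subset a)%:R * M a (a :\: b).
Definition Bassign (f : F) (n : V) : mat St :=
  fun a b => (b == [set upd pi f n | pi in a])%:R.
Definition Bunion (M N : mat St) : mat St :=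
  fun a b => \sum_(c : St) \sum_(d : St) (c :|: d == b)%:R * M a c * N a d.
Definition Bchoice (M : mat St) (r : R) (N : mat St) : mat St :=
  fun a b => r * M a b + (1 - r) * N a b.

(* B[[p^(n)]] computed from B[[p]] (literal unfolding of p^(n)) *)
Fixpoint Bpow (M : mat St) (n : nat) : mat St :=
  match n with
  | 0 => Btrue
  | n'.+1 => Bunion Btrue (mmul M (Bpow M n'))
  end.

Definition Bstar (M : mat St) : mat St :=
  fun a b => limn (fun n => Bpow M n a b).

(* READING: disjunction of testicates is interpreted as union (&),
   conjunction as sequencing (;), as usual in ProbNetKAT. *)
Fixpoint Bpred (t : test) : mat St :=
  match t with
  | PFalse => Bfalse
  | PTrue => Btrue
  | PTest f n => Btest f n
  | PNeg t => Bneg (Bpred t)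
  | POr t u => Bunion (Bpred t) (Bpred u)
  | PAnd t u => mmul (Bpred t) (Bpred u)
  end.

Fixpoint B (p : prog) : mat St :=
  match p with
  | Pred t => Bpred t
  | Assign f n => Bassign f n
  | Union p q => Bunion (B p) (B q)
  | Seq p q => mmul (B p) (B q)
  | Choice p r q => Bchoice (B p) r (B q)
  | Star p => Bstar (B p)
  end.

Definition S (p : prog) : mat (St * St)%type :=
  fun x y => (y.2 == x.2 :|: x.1)%:R * B p x.1 y.1.

End ProbNetKAT.

From HB Require Import structures.
From mathcomp Require Import all_boot all_order all_algebra.
From mathcomp Require Import all_classical all_reals all_analysis.
Import Order.TTheory GRing.Theory Num.Theory.
Import numFieldNormedType.Exports.
Set Implicit Arguments. Unset Strict Implicit. Unset Printing Implicit Defensive.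
Local Open Scope ring_scope.

(** Both sides are expectations of the indicator of [b' = _ :|: b]: on the left
    under B[[p^(n)]], on the right under S[[p]]^(n+1), whose second component
    accumulates the inputs seen so far. Unfolding p^(n+1) = true & p;p^(n) and
    taking one small step give the same recursion; the base case needs the rows of
    B[[p]] to sum to 1.

    Stochasticity is preserved by every constructor (for negation because tests
    only shrink their input). For p^*, the probability [subset_mass n a c] that
    p^(n) maps a into a subset of c is nonincreasing in n, hence convergent; each
    entry of B[[p^(n)]] is that mass minus the entries for proper subsets of c, so
    by induction on #|c| every entry converges, and the row sums, constantly 1,
    pass to the limit. *)

Section Expectation.
Variables (R : realType) (T : finType).
Implicit Types (M N : mat R T) (a : T) (g : T -> R).

Definition expect M a g : R := \sum_b M a b * g b.

Definition stochastic M :=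
  (forall a b, 0 <= M a b) /\ forall a, \sum_b M a b = 1.

Lemma eq_expect M a g h : g =1 h -> expect M a g = expect M a h.
Proof. by move=> gh; apply: eq_bigr => b _; rewrite gh. Qed.

Lemma expect_cst M a k : expect M a (fun=> k) = (\sum_b M a b) * k.
Proof. by rewrite /expect big_distrl. Qed.

Lemma expectZ M a k g : expect M a (fun b => k * g b) = k * expect M a g.
Proof. by rewrite /expect big_distrr /=; apply: eq_bigr => b _; rewrite mulrCA. Qed.

Lemma expect_ge0 M a g :
  (forall a b, 0 <= M a b) -> (forall b, 0 <= g b) -> 0 <= expect M a g.
Proof. by move=> M_ge0 g_ge0; apply: sumr_ge0 => b _; rewrite mulr_ge0. Qed.

Lemma ler_expect M a g h :
  (forall a b, 0 <= M a b) -> (forall b, g b <= h b) ->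
  expect M a g <= expect M a h.
Proof. by move=> M_ge0 gh; apply: ler_sum => b _; rewrite ler_wpM2l. Qed.

Lemma expect_le1 M a g :
  stochastic M -> (forall b, g b <= 1) -> expect M a g <= 1.
Proof.
move=> [M_ge0 M1] g_le1; rewrite -(M1 a) -[leRHS]mulr1 -expect_cst.
exact: ler_expect.
Qed.

Lemma expect_fun (f : T -> T) a g :
  expect (fun a b => (b == f a)%:R) a g = g (f a).
Proof.
rewrite /expect (bigD1 (f a)) //= eqxx mul1r big1 ?addr0 //.
by move=> b /negbTE ->; rewrite mul0r.
Qed.

Lemma expect_mid a g : expect (@mid R T) a g = g a.
Proof.
by rewrite -(expect_fun id); apply: eq_bigr => b _; rewrite /mid eq_sym.
Qed.

Lemma expect_mmul M N a g :
  expect (mmul M N) a g = expect M a (fun c => expect N c g).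
Proof.
rewrite /expect /mmul; under eq_bigr do rewrite big_distrl.
rewrite exchange_big; apply: eq_bigr => c _.
by rewrite big_distrr /=; apply: eq_bigr => b _; rewrite mulrA.
Qed.

Lemma fun_stochastic (f : T -> T) : stochastic (fun a b => (b == f a)%:R).
Proof.
split=> [a b|a]; first exact: ler0n.
by have := expect_fun f a (fun=> 1); rewrite expect_cst mulr1.
Qed.

Lemma mid_stochastic : stochastic (@mid R T).
Proof.
split=> [a b|a]; first exact: ler0n.
by have := expect_mid a (fun=> 1); rewrite expect_cst mulr1.
Qed.

Lemma mmul_stochastic M N : stochastic M -> stochastic N -> stochastic (mmul M N).
Proof.
move=> [M_ge0 M1] [N_ge0 N1]; split=> [a b|a].
  by apply: sumr_ge0 => c _; rewrite mulr_ge0.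
have := expect_mmul M N a (fun=> 1); rewrite !expect_cst mulr1 => ->.
by under eq_expect do rewrite expect_cst N1 mulr1; rewrite expect_cst M1 mulr1.
Qed.

End Expectation.

Lemma expect_pair (R : realType) (T1 T2 : finType) (M : mat R (T1 * T2)%type) x g :
  expect M x g = \sum_u \sum_v M x (u, v) * g (u, v).
Proof. by rewrite /expect pair_bigA; apply: eq_bigr => -[]. Qed.

Section Combinators.
Variables (F V : finType) (R : realType).
Local Notation St := {set packet F V}.
Implicit Types (M N : mat R St) (a b : St) (g : St -> R).

Lemma expect_Bunion M N a g :
  expect (Bunion M N) a g = expect M a (fun c => expect N a (fun d => g (c :|: d))).
Proof.
rewrite /expect /Bunion; under eq_bigr do rewrite big_distrl /=.
rewrite exchange_big; apply: eq_bigr => c _ /=.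
under eq_bigr do rewrite big_distrl /=.
rewrite exchange_big big_distrr; apply: eq_bigr => d _ /=.
rewrite (bigD1 (c :|: d)) //= eqxx mul1r big1 ?addr0 => [|b]; first by rewrite !mulrA.
by rewrite eq_sym => /negbTE ->; rewrite !mul0r.
Qed.

Lemma Bunion_stochastic M N :
  stochastic M -> stochastic N -> stochastic (Bunion M N).
Proof.
move=> [M_ge0 M1] [N_ge0 N1]; split=> [a b|a].
  by apply: sumr_ge0 => c _; apply: sumr_ge0 => d _; rewrite !mulr_ge0 ?ler0n.
by have := expect_Bunion M N a (fun=> 1); rewrite !expect_cst M1 N1 !mulr1.
Qed.

Lemma Bchoice_stochastic M N r :
  0 <= r <= 1 -> stochastic M -> stochastic N -> stochastic (Bchoice M r N).
Proof.
move=> /andP[r_ge0 r_le1] [M_ge0 M1] [N_ge0 N1]; split=> [a b|a].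
  by rewrite addr_ge0 // mulr_ge0 // subr_ge0.
by rewrite big_split -!big_distrr /= M1 N1 !mulr1 addrC subrK.
Qed.

Definition shrinking M := forall a b, ~~ (b \subset a) -> M a b = 0.

Lemma Bneg_stochastic M : stochastic M -> shrinking M -> stochastic (Bneg M).
Proof.
move=> [M_ge0 M1] M_shr; split=> [a b|a]; first by rewrite mulr_ge0 ?ler0n.
have setDDI c : a :\: (a :\: c) = a :&: c.
  by rewrite finset.setDDr finset.setDv finset.set0U.
rewrite -(M1 a) [RHS](bigID (fun c : St => c \subset a)) /=.
rewrite [X in _ + X]big1 ?addr0 => [|c /M_shr //].
(* [c |-> a :\: c] is an involution on the subsets of [a]. *)
rewrite [RHS](reindex_onto (finset.setD a) (finset.setD a)) => [|c /finset.setIidPr];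
  last by rewrite setDDI.
rewrite [RHS]big_mkcond; apply: eq_bigr => b _.
rewrite setDDI finset.subsetDl finset.eqEsubset finset.subsetIr finset.subsetI.
rewrite subxx andbT /=.
by rewrite /Bneg; case: (b \subset a); rewrite ?mul1r ?mul0r.
Qed.

Lemma Bneg_shrinking M : shrinking (Bneg M).
Proof. by move=> a b /negbTE b_sub; rewrite /Bneg b_sub mul0r. Qed.

Lemma fun_shrinking (f : St -> St) :
  (forall a, f a \subset a) -> shrinking (fun a b => (b == f a)%:R).
Proof. by move=> f_sub a b; case: eqP => // ->; rewrite f_sub. Qed.

Lemma mid_shrinking : shrinking (@mid R St).
Proof. by move=> a b; rewrite /mid; case: eqP => // ->; rewrite subxx. Qed.

Lemma Bunion_shrinking M N : shrinking M -> shrinking N -> shrinking (Bunion M N).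
Proof.
move=> M_shr N_shr a b b_sub; apply: big1 => c _; apply: big1 => d _.
have [c_sub|/M_shr->] := boolP (c \subset a); last by rewrite mulr0 mul0r.
have [d_sub|/N_shr->] := boolP (d \subset a); last by rewrite mulr0.
by case: eqP b_sub => [<-|]; rewrite ?finset.subUset ?c_sub ?d_sub ?mul0r.
Qed.

Lemma mmul_shrinking M N : shrinking M -> shrinking N -> shrinking (mmul M N).
Proof.
move=> M_shr N_shr a b b_sub; apply: big1 => c _.
have [c_sub|/M_shr->] := boolP (c \subset a); last by rewrite mul0r.
have [bc|/N_shr->] := boolP (b \subset c); last by rewrite mulr0.
by move: b_sub; rewrite (fintype.subset_trans bc c_sub).
Qed.

Lemma Bpred_stochastic_shrinking t : stochastic (Bpred R t) /\ shrinking (Bpred R t).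
Proof.
elim: t => [||f n|t [t1 t2]|t [t1 t2] u [u1 u2]|t [t1 t2] u [u1 u2]] /=.
- split; first exact: (fun_stochastic _ (fun=> finset.set0)).
  by apply: (fun_shrinking (f := fun=> finset.set0)) => a; exact: finset.sub0set.
- by split; [exact: mid_stochastic|exact: mid_shrinking].
- split; first exact: (fun_stochastic _ (fun a => [set pi in a | pi f == n])).
  apply: (fun_shrinking (f := fun a => [set pi in a | pi f == n])) => a.
  by rewrite finset.setIdE finset.subsetIl.
- by split; [exact: Bneg_stochastic|exact: Bneg_shrinking].
- by split; [exact: Bunion_stochastic|exact: Bunion_shrinking].
- by split; [exact: mmul_stochastic|exact: mmul_shrinking].
Qed.

End Combinators.

Section Iteration.
Variables (F V : finType) (R : realType).
Local Notation St := {set packet F V}.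
Variable M : mat R St.
Implicit Types (a b c : St) (g : St -> R).

Lemma expect_Bpow_succ n a g :
  expect (Bpow M n.+1) a g =
  expect M a (fun e => expect (Bpow M n) e (fun d => g (a :|: d))).
Proof. by rewrite /= expect_Bunion expect_mid expect_mmul. Qed.

Hypothesis M_stoch : stochastic M.

Lemma Bpow_stochastic n : stochastic (Bpow M n).
Proof.
elim: n => [|n IH] /=; first exact: mid_stochastic.
by apply: Bunion_stochastic; [exact: mid_stochastic|exact: mmul_stochastic].
Qed.

Definition subset_mass n a c := expect (Bpow M n) a (fun b => (b \subset c)%:R).

Lemma subset_mass0 a c : subset_mass 0 a c = (a \subset c)%:R.
Proof. exact: expect_mid. Qed.

Lemma subset_massS n a c :
  subset_mass n.+1 a c = (a \subset c)%:R * expect M a (fun e => subset_mass n e c).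
Proof.
rewrite /subset_mass expect_Bpow_succ -expectZ; apply: eq_expect => e.
by rewrite -expectZ; apply: eq_expect => d; rewrite finset.subUset -mulnb natrM.
Qed.

Lemma subset_mass_ge0 n a c : 0 <= subset_mass n a c.
Proof. by apply: expect_ge0 => [|b]; [case: (Bpow_stochastic n)|exact: ler0n]. Qed.

Lemma subset_mass_le1 n a c : subset_mass n a c <= 1.
Proof. by apply: expect_le1 => [|b]; [exact: Bpow_stochastic|rewrite lern1 leq_b1]. Qed.

Lemma subset_mass_nonincreasing n a c : subset_mass n.+1 a c <= subset_mass n a c.
Proof.
elim: n a => [|n IH] a.
  rewrite subset_massS subset_mass0 ler_piMr ?ler0n //.
  by apply: expect_le1 => // e; exact: subset_mass_le1.
rewrite subset_massS [leRHS]subset_massS ler_wpM2l ?ler0n //.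
by apply: ler_expect => //; case: M_stoch.
Qed.

Lemma subset_mass_cvg a c : cvgn (fun n => subset_mass n a c).
Proof.
apply: nonincreasing_is_cvgn.
  by apply/nonincreasing_seqP => n; exact: subset_mass_nonincreasing.
by exists 0 => _ [n _ <-]; exact: subset_mass_ge0.
Qed.

Lemma subset_massE n a b :
  subset_mass n a b = Bpow M n a b + \sum_(c : St | c \proper b) Bpow M n a c.
Proof.
rewrite /subset_mass /expect (bigD1 b) //= subxx mulr1; congr (_ + _).
rewrite big_mkcond [RHS]big_mkcond; apply: eq_bigr => c _.
rewrite finset.properEneq andbC.
by case: (c \subset b); case: (c != b); rewrite /= ?mulr1 ?mulr0.
Qed.

Lemma Bpow_cvg a b : cvgn (fun n => Bpow M n a b).
Proof.
have [k] := ubnP #|b|; elim: k => // k IH in b *; rewrite ltnS => b_le.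
have -> : (fun n => Bpow M n a b) =
    (fun n => subset_mass n a b) - (fun n => \sum_(c : St | c \proper b) Bpow M n a c).
  by apply/funext => n; rewrite !fctE subset_massE addrK.
apply: is_cvgB; first exact: subset_mass_cvg.
apply: cvgP; apply: cvg_big => [|c /proper_card c_lt]; first exact: add_continuous.
exact/IH/(leq_trans c_lt).
Qed.

Lemma Bstar_stochastic : stochastic (Bstar M).
Proof.
split=> [a b|a]; rewrite /Bstar.
  apply: limr_ge; first exact: Bpow_cvg.
  by apply: nearW => n; case: (Bpow_stochastic n).
have sum_cvg : ((\sum_b Bpow M n a b) @[n --> \oo] -->
                 \sum_b limn (fun n => Bpow M n a b))%classic.
  by apply: cvg_big => [|b _]; [exact: add_continuous|exact: Bpow_cvg].
have sum1 : (fun n => \sum_b Bpow M n a b) = fun=> 1.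
  by apply/funext => n; case: (Bpow_stochastic n).
rewrite sum1 in sum_cvg.
by apply: (cvg_unique (@Rhausdorff R) sum_cvg); exact: cvg_cst.
Qed.

End Iteration.

Section Programs.
Variables (F V : finType) (R : realType).
Local Notation St := {set packet F V}.
Implicit Types (p : prog F V R) (a b : St).

Lemma B_stochastic p : wf p -> stochastic (B p).
Proof.
elim: p => [t|f n|p IHp q IHq|p IHp q IHq|p IHp r q IHq|p IHp] /=.
- by move=> _; case: (Bpred_stochastic_shrinking R t).
- by move=> _; exact: (fun_stochastic _ (fun a => [set upd pi f n | pi in a])).
- by move=> [/IHp ? /IHq ?]; exact: Bunion_stochastic.
- by move=> [/IHp ? /IHq ?]; exact: mmul_stochastic.
- by move=> [? [/IHp ? /IHq ?]]; exact: Bchoice_stochastic.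
- by move/IHp; exact: Bstar_stochastic.
Qed.

Lemma B_ppow p n : B (ppow p n) = Bpow (B p) n.
Proof. by elim: n => //= n ->. Qed.

Lemma expect_S p a b g :
  expect (S p) (a, b) g = expect (B p) a (fun x => g (x, b :|: a)).
Proof.
rewrite expect_pair; apply: eq_bigr => x _.
rewrite (bigD1 (b :|: a)) //= /S eqxx mul1r big1 ?addr0 // => y /negbTE /= ->.
by rewrite !mul0r.
Qed.

Lemma expect_Spow p n a b (h : St -> R) : stochastic (B p) ->
  expect (mpow (S p) n.+1) (a, b) (fun y => h y.2) =
  expect (Bpow (B p) n) a (fun c => h (c :|: b)).
Proof.
move=> [_ B1]; elim: n a b => [|n IH] a b.
  rewrite expect_mmul expect_S /=; under eq_expect do rewrite expect_mid /=.
  by rewrite expect_cst B1 mul1r expect_mid finset.setUC.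
rewrite expect_mmul expect_S expect_Bpow_succ; apply: eq_expect => x.
rewrite IH; apply: eq_expect => c.
by rewrite finset.setUC [in RHS]finset.setUAC [a :|: b]finset.setUC.
Qed.

End Programs.

Theorem lemma4p3 (F V : finType) (R : realType) (p : prog F V R) (n : nat)
    (a b b' : {set packet F V}) :
  wf p ->
  \sum_(a' : {set packet F V}) (b' == a' :|: b)%:R * B (ppow p n) a a'
  = \sum_(a' : {set packet F V}) mpow (S p) n.+1 (a, b) (a', b').
Proof.
move=> /B_stochastic B_stoch.
transitivity (expect (Bpow (B p) n) a (fun c => (b' == c :|: b)%:R)).
  by rewrite B_ppow; apply: eq_bigr => c _; rewrite mulrC.
rewrite -(expect_Spow n a b (fun c => (b' == c)%:R) B_stoch) expect_pair.
apply: eq_bigr => c _; rewrite (bigD1 b') //= eqxx mulr1 big1 ?addr0 // => d.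
by rewrite eq_sym => /negbTE ->; rewrite mulr0.
Qed.
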